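(* Let $m\ge1$ be an integer and $\mu=\lfloor m/3\rfloor$. The group $\mathbb{Z}_m$ contains $\mu$ additively disjoint pairs if and only if $m\not\equiv 6\pmod{12}$. If $m\equiv 6\pmod{12}$, then the maximum number of additively disjoint pairs in $\mathbb{Z}_m$ is $\mu-1$.
   Context: For a finite abelian group $A$, a family of $n$ additively disjoint pairs in $A$ is a family $(a_i,b_i)\in A^2$, $1\le i\le n$, such that the $3n$ elements $a_1,b_1,\ldots,a_n,b_n,a_1+b_1,\ldots,a_n+b_n$ are pairwise distinct. $A$ is called maximally additively disjoint (MAD) if it contains $\lfloor |A|/3\rfloor$ additively disjoint pairs. *)

From mathcomp Require Import all_boot all_algebra.
Set Implicit Arguments. Unset Strict Implicit. Unset Printing Implicit Defensive.
Import GRing.Theory.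
Local Open Scope ring_scope.

Definition add_disjoint (A : zmodType) (s : seq (A * A)) : bool :=
  uniq ([seq p.1 | p <- s] ++ [seq p.2 | p <- s] ++ [seq p.1 + p.2 | p <- s]).

Definition has_ad_pairs (A : zmodType) (n : nat) : Prop :=
  exists s : seq (A * A), size s = n /\ add_disjoint s.

(* The cyclic group Z_m for m >= 1, as 'I_m with its additive group structure
   (m = k.+1 so that 'I_k.+1 is canonically a zmodType; this is correct also for m = 1). *)
Notation Zm m := ('I_(m.-1).+1 : zmodType) (only parsing).

From mathcomp Require Import all_boot all_algebra.
From mathcomp Require Import zify.
Set Implicit Arguments. Unset Strict Implicit. Unset Printing Implicit Defensive.

(* The 3n elements of n additively disjoint pairs are distinct, so 3n <= m.  If
   m = 6 (mod 12), a family of m/3 pairs would partition Z_m into triples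
   {a, b, a + b}; the representatives 0, ..., m - 1 then sum to C(m, 2), which
   is odd since m = 2 (mod 4), while each triple contributes an even amount
   because m is even.
   Conversely, let (a_i, b_i), i < n, be pairs of positive integers with all
   2n entries distinct and distinct differences b_i - a_i <= n.  The pairs
   (b_i - a_i, n + a_i), whose sums are n + b_i, are additively disjoint in
   Z_m as soon as n + b_i <= m, since b_i - a_i <= n < n + a_i, n + b_i <= m.
   Skolem sequences of orders 4s and 4s + 1, hooked Skolem sequences of order
   4s + 2 and Rosa sequences of order 4s + 3 (s = m / 12) give the required
   number of pairs for every m >= 24 except m = 3 (mod 6); there m = 3n with
   n odd, and the pairs (3i + 1, 3i + 2) work because 2 is invertible modulo
   n.  Smaller m are settled by explicit witnesses. *)

Lemma odd_bin2_mod4 m : m %% 4 = 2 -> odd 'C(m, 2).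
Proof.
move=> m_mod4; rewrite bin2 -divn2 -divn_mulAC; last by rewrite dvdn2; lia.
by rewrite oddM; apply/andP; split; lia.
Qed.

Lemma eqn_mod_pos m x y : x = y %[mod m] -> 0 < x <= m -> 0 < y <= m -> x = y.
Proof.
move=> eq_xy /andP[x_gt0 x_le] /andP[y_gt0 y_le].
have : x.-1 = y.-1 %[mod m].
  by apply/eqP; rewrite -(eqn_modDr 1) !addn1 !prednK // eq_xy.
by rewrite !modn_small; lia.
Qed.

Lemma modn_lt_double x m : x < 2 * m -> x %% m = if x < m then x else x - m.
Proof.
move=> lt_2m; case: ltnP => [/modn_small // | le_m].
by rewrite -[in LHS](subnK le_m) modnDr modn_small //; lia.
Qed.

Ltac case_ifs :=
  repeat match goal with |- context [if ?c then _ else _] => case: (boolP c) => ? /= end.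

Lemma add_disjoint_take (A : zmodType) (s : seq (A * A)) k :
  add_disjoint s -> add_disjoint (take k s).
Proof. by apply: subseq_uniq; rewrite !map_take !cat_subseq ?take_subseq. Qed.

Lemma has_ad_pairs_le (A : zmodType) n1 n2 :
  n1 <= n2 -> has_ad_pairs A n2 -> has_ad_pairs A n1.
Proof.
move=> le_n12 [s [size_s ad_s]]; exists (take n1 s).
by rewrite size_take_min size_s (minn_idPl le_n12) add_disjoint_take.
Qed.

Definition add_elems (A : zmodType) (s : seq (A * A)) : seq A :=
  [seq p.1 | p <- s] ++ [seq p.2 | p <- s] ++ [seq (p.1 + p.2)%R | p <- s].

Lemma has_ad_pairs_card (A : finZmodType) n : has_ad_pairs A n -> 3 * n <= #|A|.
Proof.
move=> [s [<- ad_s]]; have := max_card (mem (add_elems s)).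
rewrite (card_uniqP ad_s) !size_cat !size_map.
by apply: leq_trans; rewrite !mulSn mul0n addn0.
Qed.

Lemma no_ad_partition p n : 3 * n = p.+1 -> p.+1 %% 4 = 2 -> ~ has_ad_pairs 'I_p.+1 n.
Proof.
move=> covers m_mod4 [s [size_s ad_s]].
have size_elems : size (add_elems s) = p.+1 by rewrite !size_cat !size_map !size_s; lia.
have perm_all : perm_eq (add_elems s) (enum 'I_p.+1).
  have [|_ eq_all] := uniq_min_size ad_s (fun x _ => mem_enum _ x).
    by rewrite size_enum_ord size_elems.
  exact: uniq_perm ad_s (enum_uniq _) eq_all.
have sum_all : \sum_(x <- add_elems s) val x = 'C(p.+1, 2).
  rewrite (perm_big _ perm_all) -(big_map val xpredT id) val_enum_ord.
  by rewrite -bin2_sum /index_iota subn0.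
have sum_even : 2 %| \sum_(x <- add_elems s) val x.
  have -> : \sum_(x <- add_elems s) val x =
            \sum_(q <- s) (val q.1 + val q.2 + val (q.1 + q.2)%R).
    by rewrite !big_split /add_elems !big_cat !big_map /= addnA.
  apply: dvdn_sum => q _ /=.
  have two_dvd_m : 2 %| p.+1 by lia.
  by rewrite /dvdn -modnDmr modn_dvdm // modnDmr addnn -mul2n modnMr.
by move: sum_even; rewrite sum_all dvdn2 odd_bin2_mod4.
Qed.

Definition pair_elem (q : nat * nat) (r : nat) : nat := nth 0 [:: q.1; q.2; q.1 + q.2] r.

Lemma has_ad_pairs_mod p (L : seq (nat * nat)) :
  uniq [seq pair_elem q r %% p.+1 | r <- iota 0 3, q <- L] ->
  has_ad_pairs 'I_p.+1 (size L).
Proof.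
pose s := [seq (inZp q.1, inZp q.2) : 'I_p.+1 * 'I_p.+1 | q <- L].
have val_s : map val (add_elems s) = [seq pair_elem q r %% p.+1 | r <- iota 0 3, q <- L].
  rewrite /= cats0 !map_cat -!map_comp; congr (_ ++ _ ++ _).
  by apply: eq_map => q /=; rewrite modnDm.
rewrite -val_s (map_inj_uniq val_inj) => ad_s.
by exists s; rewrite size_map.
Qed.

Lemma has_ad_pairs_inj p n (f : nat -> nat * nat) :
  (forall r1 r2 i1 i2, r1 < 3 -> r2 < 3 -> i1 < n -> i2 < n ->
     pair_elem (f i1) r1 = pair_elem (f i2) r2 %[mod p.+1] -> r1 = r2 /\ i1 = i2) ->
  has_ad_pairs 'I_p.+1 n.
Proof.
move=> inj_f; rewrite -[n](size_iota 0) -(size_map f).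
apply: has_ad_pairs_mod; rewrite allpairs_mapr; apply: allpairs_uniq; rewrite ?iota_uniq //.
have mem_st q : q \in [seq (r, i) | r <- iota 0 3, i <- iota 0 n] -> q.1 < 3 /\ q.2 < n.
  by case/allpairsP => -[r i] [+ + ->]; rewrite !mem_iota /=; lia.
move=> [r1 i1] [r2 i2] /mem_st[/= lt_r1 lt_i1] /mem_st[/= lt_r2 lt_i2] /=.
by move=> /(inj_f _ _ _ _ lt_r1 lt_r2 lt_i1 lt_i2) [-> ->].
Qed.

Lemma has_ad_pairs_odd_mul3 p n : p.+1 = 3 * n -> odd n -> has_ad_pairs 'I_p.+1 n.
Proof.
move=> m_eq odd_n; apply: (@has_ad_pairs_inj p n (fun i => (3 * i + 1, 3 * i + 2))).
move=> r1 r2 i1 i2 + + lt_i1 lt_i2.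
by case: r1 => [|[|[|//]]] _; case: r2 => [|[|[|//]]] _;
  rewrite /pair_elem /= !modn_lt_double; case_ifs; lia.
Qed.

(* [f i = (a_i, b_i)]; the difference condition is stated additively, as
   b_i + a_j = b_j + a_i, to keep truncated subtraction out of it. *)
Definition skolem_type (n k : nat) (f : nat -> nat * nat) : Prop :=
  (forall i, i < n -> [/\ 0 < (f i).1 < (f i).2, (f i).2 <= k & (f i).2 <= (f i).1 + n]) /\
  (forall i j, i < n -> j < n ->
   [/\ (f i).1 <> (f j).2, (f i).1 = (f j).1 -> i = j, (f i).2 = (f j).2 -> i = j &
       (f i).2 + (f j).1 = (f j).2 + (f i).1 -> i = j]).

Lemma has_ad_pairs_skolem p n k f :
  skolem_type n k f -> n + k <= p.+1 -> has_ad_pairs 'I_p.+1 n.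
Proof.
move=> [f_range f_inj] le_m; pose g i := ((f i).2 - (f i).1, n + (f i).1).
have g_range r i : r < 3 -> i < n -> 0 < pair_elem (g i) r <= p.+1.
  move=> lt_r /f_range [f1 f2 f3].
  by case: r lt_r => [|[|[|//]]] _; rewrite /pair_elem /g /=; lia.
apply: (@has_ad_pairs_inj p n g) => r1 r2 i1 i2 lt_r1 lt_r2 lt_i1 lt_i2.
move=> /eqn_mod_pos /(_ (g_range _ _ lt_r1 lt_i1) (g_range _ _ lt_r2 lt_i2)).
have [[f1 _ f1n] [f1' _ f1n']] := (f_range i1 lt_i1, f_range i2 lt_i2).
have [[f2 f3 f4 f5] [f2' _ _ _]] := (f_inj i1 i2 lt_i1 lt_i2, f_inj i2 i1 lt_i2 lt_i1).
by case: r1 lt_r1 => [|[|[|//]]] _; case: r2 lt_r2 => [|[|[|//]]] _;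
  rewrite /pair_elem /g /=; lia.
Qed.

(* A Skolem sequence of order n uses the entries 1, ..., 2n; the hooked one
   of order 4s + 2 misses 8s + 4, the Rosa one of order 4s + 3 misses 4s + 4. *)
Definition skolem_0mod4 (s i : nat) : nat * nat :=
  if i < 2 * s then (4 * s + i, 8 * s - i)
  else if i + 2 < 3 * s then (i - 2 * s + 1, 6 * s - i - 2)
  else if i + 4 < 4 * s then (i - 2 * s + 4, 6 * s - i - 3)
  else if i + 3 < 4 * s then (s - 1, 3 * s)
  else if i + 2 < 4 * s then (s, s + 1)
  else if i + 1 < 4 * s then (2 * s, 4 * s - 1)
  else (2 * s + 1, 6 * s).

Definition skolem_1mod4 (s i : nat) : nat * nat :=
  if i < 2 * s then (4 * s + i + 2, 8 * s - i + 2)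
  else if i < 3 * s then (i - 2 * s + 1, 6 * s - i)
  else if i + 2 < 4 * s then (i - 2 * s + 3, 6 * s - i)
  else if i + 1 < 4 * s then (s + 1, s + 2)
  else if i < 4 * s then (2 * s + 1, 6 * s + 2)
  else (2 * s + 2, 4 * s + 1).

Definition hooked_skolem_2mod4 (s i : nat) : nat * nat :=
  if i < 2 * s + 1 then (i + 1, 4 * s + 3 - i)
  else if i < 2 * s + 2 then (2 * s + 2, 6 * s + 3)
  else if i < 3 * s then (i + 2 * s + 2, 10 * s + 5 - i)
  else if i < 4 * s then (i + 2 * s + 2, 10 * s + 3 - i)
  else if i < 4 * s + 1 then (6 * s + 2, 8 * s + 5)
  else (7 * s + 4, 7 * s + 5).

Definition rosa_3mod4 (s i : nat) : nat * nat :=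
  if i < 2 * s + 1 then (i + 1, 4 * s + 3 - i)
  else if i < 2 * s + 2 then (2 * s + 2, 6 * s + 5)
  else if i < 3 * s + 1 then (i + 2 * s + 3, 10 * s + 8 - i)
  else if i < 4 * s + 1 then (i + 2 * s + 3, 10 * s + 6 - i)
  else if i < 4 * s + 2 then (6 * s + 4, 8 * s + 7)
  else (7 * s + 6, 7 * s + 7).

Lemma skolem_0mod4_type s : 2 <= s -> skolem_type (4 * s) (8 * s) (skolem_0mod4 s).
Proof.
move=> s_ge2; split=> [i lt_i | i j lt_i lt_j]; rewrite /skolem_0mod4.
all: by case_ifs; split; lia.
Qed.

Lemma skolem_1mod4_type s : 2 <= s -> skolem_type (4 * s + 1) (8 * s + 2) (skolem_1mod4 s).
Proof.
move=> s_ge2; split=> [i lt_i | i j lt_i lt_j]; rewrite /skolem_1mod4.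
all: by case_ifs; split; lia.
Qed.

Lemma hooked_skolem_2mod4_type s :
  2 <= s -> skolem_type (4 * s + 2) (8 * s + 5) (hooked_skolem_2mod4 s).
Proof.
move=> s_ge2; split=> [i lt_i | i j lt_i lt_j]; rewrite /hooked_skolem_2mod4.
all: by case_ifs; split; lia.
Qed.

Lemma rosa_3mod4_type s : 1 <= s -> skolem_type (4 * s + 3) (8 * s + 7) (rosa_3mod4 s).
Proof.
move=> s_ge1; split=> [i lt_i | i j lt_i lt_j]; rewrite /rosa_3mod4.
all: by case_ifs; split; lia.
Qed.

Definition ad_max (m : nat) : nat := if m %% 12 == 6 then (m %/ 3).-1 else m %/ 3.

Definition small_ad_pairs (m : nat) : seq (nat * nat) :=
  match m with
  | 3 | 4 | 5 | 6 => [:: (1, 2)]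
  | 7 => [:: (1, 2); (5, 6)]
  | 8 => [:: (1, 2); (5, 7)]
  | 9 => [:: (1, 2); (4, 5); (7, 8)]
  | 10 => [:: (1, 2); (4, 6); (7, 8)]
  | 11 => [:: (1, 2); (4, 5); (7, 10)]
  | 12 => [:: (1, 2); (4, 6); (5, 7); (9, 11)]
  | 13 => [:: (1, 2); (4, 5); (6, 7); (10, 11)]
  | 14 => [:: (1, 2); (4, 5); (6, 7); (10, 12)]
  | 15 => [:: (1, 2); (4, 5); (7, 8); (10, 11); (13, 14)]
  | 16 => [:: (1, 2); (4, 5); (6, 7); (10, 14); (12, 15)]
  | 17 => [:: (1, 2); (4, 5); (6, 7); (10, 15); (12, 16)]
  | 18 => [:: (1, 2); (4, 5); (6, 7); (8, 10); (12, 17)]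
  | 19 => [:: (1, 2); (4, 5); (6, 7); (8, 11); (12, 17); (15, 18)]
  | 20 => [:: (1, 2); (4, 5); (6, 7); (8, 10); (14, 17); (16, 19)]
  | 21 => [:: (1, 2); (4, 5); (6, 7); (10, 11); (12, 17); (15, 20); (18, 19)]
  | 22 => [:: (1, 2); (4, 5); (6, 7); (8, 11); (10, 12); (15, 21); (18, 20)]
  | 23 => [:: (1, 2); (4, 5); (6, 7); (8, 10); (11, 12); (15, 22); (19, 20)]
  | _ => [::]
  end.

Lemma has_ad_pairs_small p : p.+1 < 24 -> has_ad_pairs 'I_p.+1 (ad_max p.+1).
Proof.
have small_ok : all (fun m => (size (small_ad_pairs m.+1) == ad_max m.+1) &&
    uniq [seq pair_elem q r %% m.+1 | r <- iota 0 3, q <- small_ad_pairs m.+1]) (iota 0 23).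
  by [].
move=> small; have /(allP small_ok)/andP[/eqP <-] : p \in iota 0 23 by rewrite mem_iota; lia.
exact: has_ad_pairs_mod.
Qed.

Lemma has_ad_pairs_large p :
  24 <= p.+1 -> p.+1 %% 6 != 3 -> has_ad_pairs 'I_p.+1 (ad_max p.+1).
Proof.
move=> large not_odd3; set s := p.+1 %/ 12.
have s_ge2 : 2 <= s by lia.
have [r012 | [r456 | [r78 | r1011]]] : p.+1 %% 12 < 3 \/ 4 <= p.+1 %% 12 <= 6 \/
    7 <= p.+1 %% 12 <= 8 \/ 10 <= p.+1 %% 12 by lia.
- rewrite (_ : ad_max _ = 4 * s); last by rewrite /ad_max; case: eqP; lia.
  by apply: has_ad_pairs_skolem (skolem_0mod4_type s_ge2) _; lia.
- rewrite (_ : ad_max _ = 4 * s + 1); last by rewrite /ad_max; case: eqP; lia.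
  by apply: has_ad_pairs_skolem (skolem_1mod4_type s_ge2) _; lia.
- rewrite (_ : ad_max _ = 4 * s + 2); last by rewrite /ad_max; case: eqP; lia.
  by apply: has_ad_pairs_skolem (hooked_skolem_2mod4_type s_ge2) _; lia.
- rewrite (_ : ad_max _ = 4 * s + 3); last by rewrite /ad_max; case: eqP; lia.
  by apply: has_ad_pairs_skolem (rosa_3mod4_type (ltnW s_ge2)) _; lia.
Qed.

Lemma has_ad_pairs_ad_max p : has_ad_pairs 'I_p.+1 (ad_max p.+1).
Proof.
have [small | large] := ltnP p.+1 24; first exact: has_ad_pairs_small.
have [odd3 | not_odd3] := eqVneq (p.+1 %% 6) 3; last exact: has_ad_pairs_large.
rewrite (_ : ad_max _ = p.+1 %/ 3); last by rewrite /ad_max; case: eqP; lia.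
by apply: has_ad_pairs_odd_mul3; lia.
Qed.

Lemma ad_max_ub p n : has_ad_pairs 'I_p.+1 n -> n <= ad_max p.+1.
Proof.
move=> ad_n; have := has_ad_pairs_card ad_n; rewrite card_ord => le_3n.
rewrite /ad_max; case: eqP => [m_mod12 | _]; last by lia.
have : n != p.+1 %/ 3 by apply: contraPneq ad_n => ->; apply: no_ad_partition; lia.
lia.
Qed.

Lemma has_ad_pairs_iff p n : has_ad_pairs 'I_p.+1 n <-> n <= ad_max p.+1.
Proof.
split=> [/ad_max_ub // | le_n].
exact: has_ad_pairs_le le_n (has_ad_pairs_ad_max p).
Qed.

Unset Implicit Arguments.

Theorem theorem9p2 (m : nat) (hm : (1 <= m)%N) :
  let mu := (m %/ 3)%N in
  (has_ad_pairs (Zm m) mu <-> (m %% 12 != 6)%N) /\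
  ((m %% 12 = 6)%N ->
     has_ad_pairs (Zm m) mu.-1 /\
     (forall n : nat, has_ad_pairs (Zm m) n -> (n <= mu.-1)%N)).
Proof.
case: m hm => // p _ /=.
split=> [|m_mod12]; first by rewrite has_ad_pairs_iff /ad_max; case: eqP; lia.
rewrite has_ad_pairs_iff /ad_max m_mod12 /=; split=> // n.
by rewrite has_ad_pairs_iff /ad_max m_mod12.
Qed.
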